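(* Every free monoid is sofic.
   Context: For a non-empty finite set $X$, $\mathrm{Map}(X)$ is the monoid of all maps $X\to X$ under composition (identity $\mathrm{Id}_X$) with the Hamming metric $d_X(f,g)=|\{x\in X : f(x)\ne g(x)\}|/|X|$. For a monoid $M$ with identity $1_M$, finite $K\subset M$ and $\varepsilon,\alpha>0$, a map $\varphi\colon M\to\mathrm{Map}(X)$ is a $(K,\varepsilon)$-morphism if $d_X(\varphi(k_1k_2),\varphi(k_1)\varphi(k_2))\le\varepsilon$ for all $k_1,k_2\in K$ and $d_X(\varphi(1_M),\mathrm{Id}_X)\le\varepsilon$; it is $(K,\alpha)$-injective if $d_X(\varphi(k_1),\varphi(k_2))\ge\alpha$ for all distinct $k_1,k_2\in K$. $M$ is sofic if for every finite $K\subset M$ and every $\varepsilon>0$ there exist a non-empty finite set $X$ and a $(K,1-\varepsilon)$-injective $(K,\varepsilon)$-morphism $\varphi\colon M\to\mathrm{Map}(X)$. *)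

From mathcomp Require Import all_boot.
From Stdlib Require Import Reals.
Set Implicit Arguments. Unset Strict Implicit. Unset Printing Implicit Defensive.

Record is_monoid (M : Type) (mul : M -> M -> M) (one : M) : Prop := {
  monoid_assoc : forall a b c, mul a (mul b c) = mul (mul a b) c;
  monoid_mul1 : forall a, mul one a = a;
  monoid_mul1r : forall a, mul a one = a }.

Definition hamming (X : finType) (f g : X -> X) : R :=
  (INR #|[pred x : X | f x != g x]| / INR #|X|)%R.

Definition mapmul (X : finType) (f g : X -> X) : X -> X := fun x => f (g x).

Definition is_K_eps_morphism (M : Type) (mul : M -> M -> M) (one : M)
  (X : finType) (K : seq M) (eps : R) (phi : M -> (X -> X)) : Prop :=
  (forall k1 k2, List.In k1 K -> List.In k2 K ->
     (hamming (phi (mul k1 k2)) (mapmul (phi k1) (phi k2)) <= eps)%R) /\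
  (hamming (phi one) (fun x => x) <= eps)%R.

Definition is_K_alpha_injective (M : Type) (X : finType) (K : seq M)
  (alpha : R) (phi : M -> (X -> X)) : Prop :=
  forall k1 k2, List.In k1 K -> List.In k2 K -> k1 <> k2 ->
    (alpha <= hamming (phi k1) (phi k2))%R.

Definition sofic (M : Type) (mul : M -> M -> M) (one : M) : Prop :=
  forall (K : seq M) (eps : R), (0 < eps)%R ->
    exists (X : finType) (phi : M -> (X -> X)),
      (0 < #|X|)%N /\
      is_K_alpha_injective K (1 - eps) phi /\
      is_K_eps_morphism mul one K eps phi.

Definition free_monoid (A : Type) := seq A.
Definition free_mul (A : Type) (u v : free_monoid A) : free_monoid A := u ++ v.
Definition free_one (A : Type) : free_monoid A := [::].

Lemma free_monoid_is_monoid (A : Type) : is_monoid (@free_mul A) (@free_one A).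
Proof. split; [exact: catA | by [] | exact: cats0]. Qed.

From Stdlib Require Import Reals Lra.
From mathcomp Require Import all_boot all_algebra ring.
From mathcomp Require Import boolp.

Set Implicit Arguments. Unset Strict Implicit. Unset Printing Implicit Defensive.

Import GRing.Theory.

(* Fix a finite set K of words and a base B larger than the number of letters
   occurring in K.  Reading a word w as a little-endian sequence of base-B
   digits, letter a acts on F_p by x |-> B x + code(a), so w acts by the affine
   map x |-> B^|w| x + n(w) with n(w) the number w represents; this is an exact
   monoid morphism into Map(F_p).  For p prime and larger than B^|w| + n(w) for
   all w in K, distinct words of K give distinct affine maps, and two distinct
   affine maps of a field agree in at most one point: their Hamming distance is
   at least 1 - 1/p, which is as close to 1 as we like. *)

Section Digits.
Variable B : nat.

Definition from_digits (s : seq nat) : nat := foldr (fun d n => n * B + d) 0 s.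

Lemma from_digits_inj s t :
  all (fun d => d < B) s -> all (fun d => d < B) t -> size s = size t ->
  from_digits s = from_digits t -> s = t.
Proof.
elim: s t => [|d s IHs] [|e t] //= /andP[dB sB] /andP[eB tB] [size_st] eq_st.
have B_gt0 : 0 < B by apply: leq_ltn_trans dB.
have eq_de : d = e.
  by have := congr1 (modn^~ B) eq_st; rewrite /= !modnMDl !modn_small.
have := congr1 (divn^~ B) eq_st.
rewrite /= !divnMDl // !divn_small // !addn0 => /IHs-> //.
by rewrite eq_de.
Qed.

Variable R : comPzRingType.
Local Open Scope ring_scope.

Definition digit_map (s : seq nat) (x : R) : R :=
  foldr (fun d y => B%:R * y + d%:R) x s.

Lemma digit_map_cat s t x : digit_map (s ++ t) x = digit_map s (digit_map t x).
Proof. by rewrite /digit_map foldr_cat. Qed.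

Lemma digit_mapE s x :
  digit_map s x = (expn B (size s))%:R * x + (from_digits s)%:R.
Proof.
elim: s => [|d s IHs] /=; first by rewrite expn0 mul1r addr0.
by rewrite IHs expnS natrD !natrM; ring.
Qed.

End Digits.

Lemma affine_agree2 (F : fieldType) (a1 c1 a2 c2 x y : F) : x != y ->
  (a1 * x + c1 = a2 * x + c2 -> a1 * y + c1 = a2 * y + c2 -> a1 = a2 /\ c1 = c2)%R.
Proof.
move=> neq_xy eq_x eq_y.
have : ((a1 - a2) * (x - y) = 0)%R.
  have -> : ((a1 - a2) * (x - y) =
             (a1 * x + c1) - (a2 * x + c2) - ((a1 * y + c1) - (a2 * y + c2)))%R
    by ring.
  by rewrite eq_x eq_y !subrr.
move/eqP; rewrite mulf_eq0 !subr_eq0 (negbTE neq_xy) orbF => /eqP eq_a.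
by split=> //; move: eq_x; rewrite eq_a => /addrI.
Qed.

Lemma card_affine_agree_le1 (F : finFieldType) (a1 c1 a2 c2 : F) :
  (a1 != a2) || (c1 != c2) ->
  #|[pred x | a1 * x + c1 == a2 * x + c2]%R| <= 1.
Proof.
move=> neq_affine; apply/card_le1_eqP => x y; rewrite !inE => /eqP eq_x /eqP eq_y.
apply/eqP; apply: contraLR neq_affine => neq_yx.
by have [-> ->] := affine_agree2 neq_yx eq_y eq_x; rewrite !eqxx.
Qed.

Lemma natr_Fp_inj p m n : prime p -> m < p -> n < p ->
  (m%:R = n%:R :> 'F_p)%R -> m = n.
Proof.
by move=> p_pr m_lt n_lt /(congr1 val); rewrite /= !val_Fp_nat // !modn_small.
Qed.

Lemma In_mem (T : eqType) (x : T) s : List.In x s -> x \in s.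
Proof. by elim: s => //= y s IHs [->|/IHs]; rewrite inE ?eqxx // => ->; rewrite orbT. Qed.

Section Hamming.
Local Open Scope R_scope.

Lemma hamming_eq0 (X : finType) (f g : X -> X) : f =1 g -> hamming f g = 0.
Proof.
move=> eq_fg; rewrite /hamming (@eq_card0 _ [pred x | f x != g x]) /=.
  by rewrite /Rdiv Rmult_0_l.
by move=> x; rewrite !inE eq_fg eqxx.
Qed.

Lemma hamming_agree_le1 (X : finType) (f g : X -> X) :
  (0 < #|X|)%N -> (#|[pred x | f x == g x]| <= 1)%N -> 1 - / INR #|X| <= hamming f g.
Proof.
move=> X_gt0 agree_le1.
have /leP/le_INR le_diff : (#|X| <= #|[pred x | f x != g x]|.+1)%N.
  have -> : #|[pred x | f x != g x]| = #|[predC [pred x | f x == g x]]|.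
    by apply: eq_card => x; rewrite !inE.
  by rewrite -(cardC [pred x | f x == g x]) -add1n leq_add2r.
have X_pos : 0 < INR #|X| by apply/lt_0_INR/ltP.
rewrite S_INR in le_diff; rewrite /hamming.
apply: (Rmult_le_reg_r (INR #|X|)) => //.
have X_neq0 : INR #|X| <> 0 by lra.
by rewrite Rmult_minus_distr_r /Rdiv Rmult_assoc !Rinv_l //; lra.
Qed.

Lemma inv_INR_lt (m n : nat) : (0 < m)%N -> (m < n)%N -> / INR n < / INR m.
Proof. by move=> /ltP/lt_0_INR m_pos /ltP/lt_INR m_lt_n; apply: Rinv_lt_contravar; nra. Qed.

End Hamming.

Section WordMaps.
Variables (A : eqType) (L : seq A) (B : nat).
Hypotheses (base_gt1 : 1 < B) (letters_lt_base : size L < B).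

Definition word_digits (w : seq A) : seq nat := map (index^~ L) w.

Definition word_map p (w : seq A) : 'F_p -> 'F_p := digit_map B (word_digits w).
Arguments word_map : clear implicits.

Definition word_weight (w : seq A) : nat := B ^ size w + from_digits B (word_digits w).

Lemma word_map_cat p u v x : word_map p (u ++ v) x = word_map p u (word_map p v x).
Proof. by rewrite /word_map /word_digits map_cat digit_map_cat. Qed.

Lemma word_digits_lt w : all [in L] w -> all (fun d => d < B) (word_digits w).
Proof.
rewrite all_map => /allP wL; apply/allP => a /wL aL /=.
by rewrite (ltn_trans _ letters_lt_base) ?index_mem.
Qed.

Lemma word_map_agree_le1 p u v : prime p ->
  all [in L] u -> all [in L] v -> u != v -> word_weight u < p -> word_weight v < p ->
  #|[pred x : 'F_p | word_map p u x == word_map p v x]| <= 1.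
Proof.
move=> p_pr uL vL neq_uv u_lt v_lt.
rewrite (eq_card (B := [pred x : 'F_p | (expn B (size (word_digits u)))%:R * x
      + (from_digits B (word_digits u))%:R == (expn B (size (word_digits v)))%:R * x
      + (from_digits B (word_digits v))%:R]%R)); last first.
  by move=> x; rewrite !inE /word_map !digit_mapE.
apply: card_affine_agree_le1; apply: contraR neq_uv.
rewrite negb_or !negbK !size_map => /andP[/eqP/natr_Fp_inj eq_pow /eqP/natr_Fp_inj eq_num].
have eq_size : size u = size v.
  apply/eqP; rewrite -(eqn_exp2l _ _ base_gt1) eq_pow //.
    exact: leq_ltn_trans (leq_addr _ _) u_lt.
  exact: leq_ltn_trans (leq_addr _ _) v_lt.
have index_L_inj : {in L &, injective (index^~ L)} by move=> a; apply: index_inj.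
apply/eqP; apply: (inj_in_map index_L_inj) => //.
apply: (@from_digits_inj B); rewrite ?word_digits_lt ?size_map //.
apply: eq_num => //; [exact: leq_ltn_trans (leq_addl _ _) u_lt |
                      exact: leq_ltn_trans (leq_addl _ _) v_lt].
Qed.

End WordMaps.

Arguments word_map {A} L B p w _.

Theorem free_monoid_sofic (A : eqType) : sofic (@free_mul A) (@free_one A).
Proof.
move=> K eps eps_gt0.
pose L := flatten K; pose B := (size L).+2.
have letters_K k : k \in K -> all [in L] k.
  by move=> kK; apply/allP => a ak; apply/flattenP; exists k.
have [N [invN_lt /ltP N_gt0]] := archimed_cor1 eps eps_gt0.
have [p p_gt p_pr] := prime_above (maxn N (\max_(k <- K) word_weight L B k)).
have weight_lt k : k \in K -> word_weight L B k < p.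
  move=> kK; apply: leq_ltn_trans (leq_trans _ (leq_maxr N _)) p_gt.
  exact: leq_bigmax_seq.
have card_p : #|'F_p| = p := card_Fp p_pr.
exists 'F_p, (word_map L B p); split; first by rewrite card_p prime_gt0.
split=> [k1 k2 /In_mem k1K /In_mem k2K /eqP neq_k|].
  have := word_map_agree_le1 (isT : 1 < B) (leqnSn _ : size L < B)
    p_pr (letters_K _ k1K) (letters_K _ k2K) neq_k (weight_lt _ k1K) (weight_lt _ k2K).
  move=> /hamming_agree_le1; rewrite card_p => /(_ (prime_gt0 p_pr)) dist_ge.
  have invp_lt := inv_INR_lt N_gt0 (leq_ltn_trans (leq_maxl _ _) p_gt).
  apply: Rle_trans dist_ge; lra.
have eps_ge0 := Rlt_le _ _ eps_gt0.
split=> [k1 k2 _ _|]; rewrite hamming_eq0 //.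
exact: word_map_cat.
Qed.

Theorem corollary4p4 (A : Type) : sofic (@free_mul A) (@free_one A).
Proof. exact: free_monoid_sofic {classic A}. Qed.
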